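(* Let $\mathcal A$ be a finite action set and let $\{\mathcal P^{(a)}\}_{a\in\mathcal A}$ be $O$-outcome instruments on $\mathbb M_S$ for which there exist linear maps $R^{(a)}:\mathbb M_O\to\mathbb M_S\otimes\mathbb M_O$ with $R^{(a)}\circ\operatorname{Tr}_S\circ\mathcal P^{(a)}=\mathcal P^{(a)}$ and $\|R^{(a)}\|_{1\to1,\mathrm{diag}}\le\kappa_{\mathrm{uc}}$ for all $a$. Let $\mathbb E'_1,\dots,\mathbb E'_{L-1}$ be arbitrary CPTP maps on $\mathbb M_S$ and define $\tilde{\mathbf A}_t(o,a,a'):=\operatorname{Tr}_S\circ\mathcal P^{(a')}\circ(\mathbb E'_t\otimes\mathcal T_o)\circ R^{(a)}$. Fix $l\in\{0,1,\dots,L-2\}$, a prefix $\tau_l\in(\mathcal A\times[O])^l$, an action $a_{l+1}\in\mathcal A$, and for each history $\tau_{l'}$ extending $(\tau_l,a_{l+1})$ a probability distribution $\pi(\cdot\mid\tau_{l'})$ on $\mathcal A$. Write $\tilde{\mathbf A}_{L-1:l+1}:=\tilde{\mathbf A}_{L-1}(o_{L-1},a_{L-1},a_L)\cdots\tilde{\mathbf A}_{l+1}(o_{l+1},a_{l+1},a_{l+2})$. Then for every diagonal $X\in\mathbb M_O$, $$\sum_{o_{l+1},a_{l+2},o_{l+2},\dots,a_{L-1},o_{L-1},a_L}\big\|\tilde{\mathbf A}_{L-1:l+1}X\big\|_1\prod_{l'=l+1}^{L-1}\pi(a_{l'+1}\mid\tau_{l'})\le S^2\kappa_{\mathrm{uc}}\|X\|_1,$$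 where $\tau_{l'}=(\tau_l,a_{l+1},o_{l+1},\dots,a_{l'},o_{l'})$ and the sum ranges over $o_j\in[O]$, $a_j\in\mathcal A$.
   Context: $\mathbb M_d$: complex $d\times d$ matrices; $\{|o\rangle\}$ the computational basis of $\mathbb C^O$; $\|\cdot\|_1$ the trace norm. An $O$-outcome instrument is $\mathcal P(X)=\sum_{o\in[O]}\Phi_o(X)\otimes|o\rangle\langle o|$ with $\Phi_o$ completely positive and $\sum_o\Phi_o$ trace preserving. $\mathcal T_o(Y)=\langle o|Y|o\rangle$ for $Y\in\mathbb M_O$, and $(\mathbb E\otimes\mathcal T_o)$ denotes $\mathbb E\circ(\mathrm{id}_S\otimes\mathcal T_o):\mathbb M_S\otimes\mathbb M_O\to\mathbb M_S$. $\operatorname{Tr}_S$ is the partial trace over $\mathbb C^S$. For a linear map $R:\mathbb M_O\to\mathbb M_S\otimes\mathbb M_O$, $\|R\|_{1\to1,\mathrm{diag}}:=\sup\{\|R(X)\|_1: X\text{ diagonal},\|X\|_1=1\}$. *)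

(* Complex matrices are modelled over an arbitrary
   numClosedFieldType C (e.g. C = R[i] for R : realType is the field of
   complex numbers). *)
From HB Require Import structures.
From mathcomp Require Import all_boot all_order all_algebra.
From mathcomp Require Import sesquilinear spectral.
From mathcomp.real_closed Require mxtens.

Set Implicit Arguments.
Unset Strict Implicit.
Unset Printing Implicit Defensive.

Import Order.TTheory GRing.Theory Num.Theory.
Local Open Scope ring_scope.

Section QDefs.
Variable C : numClosedFieldType.

Definition adjmx m n (X : 'M[C]_(m, n)) : 'M[C]_(n, m) := map_mx Num.conj X^T.

(* index of |i> (x) |j> in C^m (x) C^n  (Kronecker convention) *)
Definition tidx m n (i : 'I_m) (j : 'I_n) : 'I_(m * n) := mxtens.mxtens_index (i, j).

Definition tens m n p q (A : 'M[C]_(m, n)) (B : 'M[C]_(p, q)) : 'M[C]_(m * p, n * q) :=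
  mxtens.tensmx A B.

Definition psd n (A : 'M[C]_n) : Prop :=
  adjmx A = A /\ forall v : 'rV[C]_n, 0 <= (v *m A *m adjmx v) 0 0.

(* trace norm = sum of singular values = sum of square roots of the
   eigenvalues (with multiplicity) of X^* X *)
Definition trnorm n (X : 'M[C]_n) : C :=
  \sum_(i < n) sqrtC (spectral_diag (adjmx X *m X) 0 i).

(* block (i,j) in M_k (x) M_n, as an element of M_n *)
Definition blk k n (Y : 'M[C]_(k * n)) (i j : 'I_k) : 'M[C]_n :=
  \matrix_(s, s') Y (tidx i s) (tidx j s').

(* id_k (x) Phi *)
Definition ampl k n p (Phi : 'M[C]_n -> 'M[C]_p) (Y : 'M[C]_(k * n)) : 'M[C]_(k * p) :=
  \matrix_(x, y) Phi (blk Y (mxtens.mxtens_unindex x).1 (mxtens.mxtens_unindex y).1)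
                      (mxtens.mxtens_unindex x).2 (mxtens.mxtens_unindex y).2.

Definition completely_positive n p (Phi : 'M[C]_n -> 'M[C]_p) : Prop :=
  forall k (Y : 'M[C]_(k * n)), psd Y -> psd (ampl Phi Y).

Definition trace_preserving n p (Phi : 'M[C]_n -> 'M[C]_p) : Prop :=
  forall X, \tr (Phi X) = \tr X.

Definition cptp n (Phi : {linear 'M[C]_n -> 'M[C]_n}) : Prop :=
  completely_positive Phi /\ trace_preserving Phi.

(* an O-outcome instrument is given by its CP components Phi_o, o in [O] *)
Definition is_instrument S O (Phi : 'I_O -> {linear 'M[C]_S -> 'M[C]_S}) : Prop :=
  (forall o, completely_positive (Phi o)) /\
  trace_preserving (fun X => \sum_o Phi o X).

Definition instr S O (Phi : 'I_O -> {linear 'M[C]_S -> 'M[C]_S}) (X : 'M[C]_S)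
  : 'M[C]_(S * O) := \sum_o tens (Phi o X) (delta_mx o o).

Definition ptrS S O (Y : 'M[C]_(S * O)) : 'M[C]_O :=
  \matrix_(o, o') \sum_(s < S) Y (tidx s o) (tidx s o').

(* T_o applied to the second factor: <o| Y |o> in M_S *)
Definition blockO S O (o : 'I_O) (Y : 'M[C]_(S * O)) : 'M[C]_S :=
  \matrix_(s, s') Y (tidx s o) (tidx s' o).

Definition is_diag n (X : 'M[C]_n) : Prop := is_diag_mx X.

Definition diag_norm_le S O (R : 'M[C]_O -> 'M[C]_(S * O)) (kappa : C) : Prop :=
  forall X : 'M[C]_O, is_diag X -> trnorm (R X) <= kappa * trnorm X.

Definition is_distribution (T : finType) (p : T -> C) : Prop :=
  (forall x, 0 <= p x) /\ \sum_x p x = 1.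

Section Atilde.
Variables (S O : nat) (A : finType).
Variables (Phi : A -> 'I_O -> {linear 'M[C]_S -> 'M[C]_S})
          (R : A -> {linear 'M[C]_O -> 'M[C]_(S * O)})
          (E : nat -> {linear 'M[C]_S -> 'M[C]_S}).

Definition Atilde (t : nat) (o : 'I_O) (a a' : A) (Y : 'M[C]_O) : 'M[C]_O :=
  ptrS (instr (Phi a') (E t (blockO o (R a Y)))).

(* apply successively the steps ((a_t, o_t), a_{t+1}), t = t0, t0+1, ... *)
Fixpoint applyA (t : nat) (st : seq ((A * 'I_O) * A)) (Y : 'M[C]_O) : 'M[C]_O :=
  if st is ((a, o), a') :: st' then applyA t.+1 st' (Atilde t o a a' Y) else Y.

(* For w = ((o_{l+1}, a_{l+2}), ..., (o_{L-1}, a_L)) : *)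
Definition acts (a1 : A) (w : seq ('I_O * A)) : seq A := a1 :: map snd w.
Definition hist_pairs (a1 : A) (w : seq ('I_O * A)) : seq (A * 'I_O) :=
  zip (acts a1 w) (map fst w).   (* (a_{l+1},o_{l+1}), ..., (a_{L-1},o_{L-1}) *)
Definition steps (a1 : A) (w : seq ('I_O * A)) : seq ((A * 'I_O) * A) :=
  zip (hist_pairs a1 w) (map snd w).

Definition lhs_sum (L l : nat) (tau : seq (A * 'I_O)) (a1 : A)
  (pi : seq (A * 'I_O) -> A -> C) (X : 'M[C]_O) : C :=
  \sum_(w : (L - 1 - l).-tuple ('I_O * A))
     trnorm (applyA l.+1 (steps a1 w) X) *
     \prod_(j < L - 1 - l) pi (tau ++ take j.+1 (hist_pairs a1 w)) (tnth w j).2.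

End Atilde.
End QDefs.

From HB Require Import structures.
From mathcomp Require Import all_boot all_order all_algebra.
From mathcomp Require Import sesquilinear spectral.
From mathcomp Require Import ring zify.
From mathcomp.real_closed Require mxtens.
Import Order.TTheory GRing.Theory Num.Theory.
Local Open Scope ring_scope.

Set Implicit Arguments.
Unset Strict Implicit.
Unset Printing Implicit Defensive.

(* Only the first step of the chain really uses a reconstruction map: from the
   second step on, R^(a) o Tr_S o P^(a) = P^(a) cancels it, so the chain
   collapses to the output distribution Tr_S P^(a_L) Psi_w (B) of a completely
   positive map Psi_w applied to the block B = <o_{l+1}| R^(a_{l+1}) X |o_{l+1}>.
   Complete positivity gives |tr Psi(e_ij)| <= (tr Psi(e_ii) + tr Psi(e_jj))/2,
   and averaging over the policy, trace preservation of the remaining channels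
   turns every tr Psi_w(e_ii) into 1.  What remains is sum_{o,i,j} |B_ij|, and
   for each of the S^2 pairs (i, j) the sum over o is at most
   ||R X||_1 <= kappa ||X||_1. *)

Section TensorIndex.
Variable C : numClosedFieldType.

Lemma tidxK m n (i : 'I_m) (j : 'I_n) : mxtens.mxtens_unindex (tidx i j) = (i, j).
Proof. exact: mxtens.mxtens_indexK. Qed.

Lemma sum_tidx m n (F : 'I_(m * n) -> C) :
  \sum_k F k = \sum_(i < m) \sum_(j < n) F (tidx i j).
Proof.
rewrite pair_big (reindex (@mxtens.mxtens_index m n)) /=; last first.
  by exists (@mxtens.mxtens_unindex m n) => x _;
    [exact: mxtens.mxtens_indexK | exact: mxtens.mxtens_unindexK].
by apply: eq_bigr => -[i j].
Qed.

Lemma instrE S O (Phi : 'I_O -> {linear 'M[C]_S -> 'M[C]_S}) X s s' o o' :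
  instr Phi X (tidx s o) (tidx s' o') = if o == o' then Phi o X s s' else 0.
Proof.
rewrite /instr summxE (bigD1 o) //= big1 => [|k nko].
  rewrite /tens /tidx mxtens.tensmxE !mxE eqxx /= addr0 eq_sym.
  by case: eqP => _; rewrite ?mulr1 ?mulr0.
by rewrite /tens /tidx mxtens.tensmxE !mxE eq_sym (negPf nko) mulr0.
Qed.

Lemma blockO_instr S O (Phi : 'I_O -> {linear 'M[C]_S -> 'M[C]_S}) X o :
  blockO o (instr Phi X) = Phi o X.
Proof. by apply/matrixP => s s'; rewrite mxE instrE eqxx. Qed.

Lemma ptrS_instr S O (Phi : 'I_O -> {linear 'M[C]_S -> 'M[C]_S}) X :
  ptrS (instr Phi X) = diag_mx (\row_o \tr (Phi o X)).
Proof.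
apply/matrixP => o o'; rewrite !mxE; under eq_bigr do rewrite instrE.
by case: eqVneq => _; rewrite ?mulr1n ?mulr0n ?big1_eq.
Qed.

Lemma mxtrace_delta n (i : 'I_n) : \tr (delta_mx i i : 'M[C]_n) = 1.
Proof.
rewrite /mxtrace (bigD1 i) //= big1 => [|k nk]; first by rewrite !mxE eqxx addr0.
by rewrite mxE (negPf nk).
Qed.

End TensorIndex.

Section CompletePositivity.
Variable C : numClosedFieldType.

Lemma blk_ampl k n p (F : 'M[C]_n -> 'M[C]_p) (Y : 'M[C]_(k * n)) i j :
  blk (ampl F Y) i j = F (blk Y i j).
Proof. by apply/matrixP => s s'; rewrite !mxE !tidxK. Qed.

Lemma ampl_comp k n p q (F : 'M[C]_p -> 'M[C]_q) (G : 'M[C]_n -> 'M[C]_p)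
  (Y : 'M[C]_(k * n)) : ampl (F \o G) Y = ampl F (ampl G Y).
Proof. by apply/matrixP => x y; rewrite [RHS]mxE blk_ampl mxE. Qed.

Lemma ampl_id k n (Y : 'M[C]_(k * n)) : ampl id Y = Y.
Proof.
apply/matrixP => x y; rewrite !mxE /tidx.
by rewrite -!surjective_pairing !mxtens.mxtens_unindexK.
Qed.

Lemma cp_comp n p q (F : 'M[C]_p -> 'M[C]_q) (G : 'M[C]_n -> 'M[C]_p) :
  completely_positive F -> completely_positive G -> completely_positive (F \o G).
Proof. by move=> cpF cpG k Y psdY; rewrite ampl_comp; apply/cpF/cpG. Qed.

Lemma cp_id n : completely_positive (@id 'M[C]_n).
Proof. by move=> k Y psdY; rewrite ampl_id. Qed.

End CompletePositivity.

Section PositiveSemidefinite.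
Variable C : numClosedFieldType.

Lemma adjmxE m n (X : 'M[C]_(m, n)) i j : adjmx X i j = (X j i)^*.
Proof. by rewrite !mxE. Qed.

Lemma adjmx_mul m n p (X : 'M[C]_(m, n)) (Y : 'M[C]_(n, p)) :
  adjmx (X *m Y) = adjmx Y *m adjmx X.
Proof. by rewrite /adjmx trmx_mul map_mxM. Qed.

Lemma adjmxK m n (X : 'M[C]_(m, n)) : adjmx (adjmx X) = X.
Proof. by apply/matrixP => i j; rewrite !mxE conjCK. Qed.

Lemma psd_gram m n (V : 'M[C]_(m, n)) : psd (adjmx V *m V).
Proof.
split; first by rewrite adjmx_mul adjmxK.
move=> u; set w := u *m adjmx V.
have -> : u *m (adjmx V *m V) *m adjmx u = w *m adjmx w.
  by rewrite /w adjmx_mul adjmxK !mulmxA.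
by rewrite mxE; apply: sumr_ge0 => k _; rewrite adjmxE -normCK exprn_ge0.
Qed.

Lemma delta_form n (M : 'M[C]_n) (p q : 'I_n) :
  delta_mx 0 p *m M *m delta_mx q 0 = (M p q)%:M :> 'M_1.
Proof. by rewrite -rowE -colE [LHS]mx11_scalar !mxE. Qed.

Lemma psd_form2 n (M : 'M[C]_n) p q (al be : C) : psd M ->
  0 <= al * al^* * M p p + al * be^* * M p q + be * al^* * M q p + be * be^* * M q q.
Proof.
move=> [_ M_ge0]; have := M_ge0 (al *: delta_mx 0 p + be *: delta_mx 0 q).
have -> : adjmx (al *: delta_mx 0 p + be *: delta_mx 0 q : 'rV[C]_n) =
    al^* *: delta_mx p 0 + be^* *: delta_mx q 0.
  apply/matrixP => x y; rewrite !mxE rmorphD !rmorphM.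
  by rewrite !rmorph_nat [(y == _) && (x == p)]andbC [(y == _) && (x == q)]andbC.
rewrite !(mulmxDl, mulmxDr) -!scalemxAl -!scalemxAr !delta_form !mxE !mulr1n.
by congr (0 <= _); ring.
Qed.

(* Evaluating the form at (1, -b/|b|) gives a + d - 2|b| >= 0. *)
Lemma hermitian_form2_le (a b d : C) :
  (forall al be : C, 0 <= al * al^* * a + al * be^* * b + be * al^* * b^* + be * be^* * d) ->
  `|b| *+ 2 <= a + d.
Proof.
move=> form_ge0.
have [->|b0] := eqVneq b 0.
  have := form_ge0 1 0; have := form_ge0 0 1.
  rewrite !(rmorph0, rmorph1, mul0r, mulr0, mul1r, add0r, addr0) normr0 mul0rn.
  by move=> d_ge0 a_ge0; apply: addr_ge0.
set n := `|b|; have n0 : n != 0 by rewrite normr_eq0.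
have conj_n : n^* = n by rewrite conj_Creal // normr_real.
have conj_b : b^* = n ^+ 2 / b by rewrite /n normCK [b * _]mulrC mulfK.
have := form_ge0 1 (- (b / n)).
have conjN x : (- x)^* = - x^* := rmorphN _ x.
have conjM x y : (x * y)^* = x^* * y^* := rmorphM _ x y.
have conjV x : (x^-1)^* = (x^*)^-1 := fmorphV _ x.
rewrite conjN conjM conjV conjC1 conj_n conj_b.
have -> : 1 * 1 * a + 1 * - (n ^+ 2 / b / n) * b + - (b / n) * 1 * (n ^+ 2 / b) +
   - (b / n) * - (n ^+ 2 / b / n) * d = a + d - n *+ 2.
  by field; apply/andP; split.
by rewrite subr_ge0.
Qed.

Lemma psd_trace_blk_le n (M : 'M[C]_(2 * n)) : psd M ->
  `|\tr (blk M ord0 ord_max)| *+ 2 <= \tr (blk M ord0 ord0) + \tr (blk M ord_max ord_max).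
Proof.
move=> psdM; apply: hermitian_form2_le => al be.
have trE x y : \tr (blk M x y) = \sum_s M (tidx x s) (tidx y s).
  by apply: eq_bigr => s _; rewrite mxE.
have herm s : M (tidx ord_max s) (tidx ord0 s) = (M (tidx ord0 s) (tidx ord_max s))^*.
  by rewrite -adjmxE psdM.1.
rewrite !trE rmorph_sum !mulr_sumr -!big_split /=; apply: sumr_ge0 => s _.
by rewrite -herm; apply: psd_form2.
Qed.

(* Psi applied to the psd Gram matrix of |0,i> + |1,j> in M_2 (x) M_n. *)
Lemma cp_trace_offdiag_le n (Psi : 'M[C]_n -> 'M[C]_n) (i j : 'I_n) :
  completely_positive Psi ->
  `|\tr (Psi (delta_mx i j))| *+ 2 <= \tr (Psi (delta_mx i i)) + \tr (Psi (delta_mx j j)).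
Proof.
move=> cpPsi.
pose sig (x : 'I_2) := if x == ord0 then i else j.
pose v : 'rV[C]_(2 * n) :=
  \row_p (((mxtens.mxtens_unindex p).2 == sig (mxtens.mxtens_unindex p).1)%:R).
have blk_gram x y : blk (adjmx v *m v) x y = delta_mx (sig x) (sig y).
  by apply/matrixP => s s'; rewrite !mxE big_ord1 !mxE !tidxK conjC_nat -natrM mulnb.
by have := psd_trace_blk_le (cpPsi 2 _ (psd_gram v)); rewrite !blk_ampl !blk_gram.
Qed.

Lemma cp_trace_le n (Psi : {linear 'M[C]_n -> 'M[C]_n}) (B : 'M[C]_n) :
  completely_positive Psi ->
  `|\tr (Psi B)| <= \sum_i \sum_j `|B i j| *
     (2^-1 * (\tr (Psi (delta_mx i i)) + \tr (Psi (delta_mx j j)))).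
Proof.
move=> cpPsi; rewrite {1}[B]matrix_sum_delta !linear_sum /=.
apply: le_trans (ler_norm_sum _ _ _) _; apply: ler_sum => i _.
rewrite !linear_sum /=; apply: le_trans (ler_norm_sum _ _ _) _; apply: ler_sum => j _.
rewrite !linearZ normrM; apply: ler_wpM2l => //.
by rewrite ler_pdivlMl ?ltr0n // mulr_natl cp_trace_offdiag_le.
Qed.

End PositiveSemidefinite.

Section TraceNorm.
Variable C : numClosedFieldType.

Lemma sum_mul_sum (I J : finType) (F : I -> C) (G : J -> C) :
  \sum_i \sum_j F i * G j = (\sum_i F i) * (\sum_j G j).
Proof. by rewrite mulr_suml; apply: eq_bigr => i _; rewrite mulr_sumr. Qed.

Lemma cauchy_schwarz_weighted (I : finType) (w a b : I -> C) :
  (forall k, 0 <= w k) -> (forall k, a k \is Num.real) -> (forall k, b k \is Num.real) ->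
  (\sum_k w k * a k * b k) ^+ 2 <= (\sum_k w k * a k ^+ 2) * (\sum_k w k * b k ^+ 2).
Proof.
move=> w_ge0 a_real b_real; rewrite -subr_ge0.
have lagrange : \sum_k \sum_l w k * w l * (a k * b l - a l * b k) ^+ 2 =
  2 * ((\sum_k w k * a k ^+ 2) * (\sum_k w k * b k ^+ 2) - (\sum_k w k * a k * b k) ^+ 2).
  rewrite (eq_bigr (fun k => \sum_l (w k * a k ^+ 2 * (w l * b l ^+ 2) +
      w k * b k ^+ 2 * (w l * a l ^+ 2) - w k * a k * b k * (2 * (w l * a l * b l))))); last first.
    by move=> k _; apply: eq_bigr => l _; ring.
  under eq_bigr do rewrite big_split /= big_split /= sumrN.
  rewrite big_split /= big_split /= sumrN !sum_mul_sum -mulr_sumr.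
  ring.
have : 0 <= \sum_k \sum_l w k * w l * (a k * b l - a l * b k) ^+ 2.
  apply: sumr_ge0 => k _; apply: sumr_ge0 => l _; apply: mulr_ge0; first exact: mulr_ge0.
  by apply: real_exprn_even_ge0 => //; rewrite rpredB ?rpredM.
by rewrite lagrange pmulr_rge0 // ltr0n.
Qed.

Lemma cauchy_schwarz (I : finType) (a b : I -> C) :
  (forall k, a k \is Num.real) -> (forall k, b k \is Num.real) ->
  (\sum_k a k * b k) ^+ 2 <= (\sum_k a k ^+ 2) * (\sum_k b k ^+ 2).
Proof.
move=> a_real b_real.
have := @cauchy_schwarz_weighted I (fun _ => 1) a b (fun _ => ler01) a_real b_real.
by under eq_bigr do rewrite mul1r; under [X in _ <= X * _]eq_bigr do rewrite mul1r;
  under [X in _ <= _ * X]eq_bigr do rewrite mul1r.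
Qed.

Section SingularValues.
Variables (N : nat) (Y : 'M[C]_N).
Let M := adjmx Y *m Y.
Let P := spectralmx M.
Let lam := spectral_diag M.
Let Q := Y *m adjmx P.

Lemma spectral_mul_adj : P *m adjmx P = 1%:M.
Proof. exact/unitarymxP/spectral_unitarymx. Qed.

Lemma spectral_adj_mul : adjmx P *m P = 1%:M.
Proof.
by rewrite -[adjmx P](invmx_unitary (spectral_unitarymx M)) mulVmx ?spectral_unit.
Qed.

Lemma gram_spectralE : M = adjmx P *m diag_mx lam *m P.
Proof.
have normalM : M \is normalmx.
  by apply/normalmxP; change (M *m adjmx M = adjmx M *m M); rewrite /M adjmx_mul adjmxK.
by rewrite {1}(orthomx_spectralP normalM) invmx_unitary ?spectral_unitarymx.
Qed.

Lemma mulmx_spectral_adjK : Y = Q *m P.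
Proof. by rewrite /Q -mulmxA spectral_adj_mul mulmx1. Qed.

Lemma eigen_gramE k : lam 0 k = \sum_p `|Q p k| ^+ 2.
Proof.
have diag_lam : diag_mx lam = adjmx Q *m Q.
  rewrite /Q adjmx_mul adjmxK !mulmxA -[P *m adjmx Y *m Y]mulmxA -/M gram_spectralE.
  by rewrite !mulmxA spectral_mul_adj mul1mx -mulmxA spectral_mul_adj mulmx1.
have /matrixP/(_ k k) := diag_lam; rewrite !mxE eqxx mulr1n => ->.
by apply: eq_bigr => p _; rewrite adjmxE normCKC.
Qed.

Lemma eigen_gram_ge0 k : 0 <= lam 0 k.
Proof. by rewrite eigen_gramE; apply: sumr_ge0 => p _; apply: exprn_ge0. Qed.

Lemma sum_row_spectral_sqr k : \sum_b `|P k b| ^+ 2 = 1.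
Proof.
transitivity ((P *m adjmx P) k k); last by rewrite spectral_mul_adj mxE eqxx.
by rewrite mxE; apply: eq_bigr => b _; rewrite adjmxE normCK.
Qed.

Lemma sum_col_spectral_sqr b : \sum_k `|P k b| ^+ 2 = 1.
Proof.
transitivity ((adjmx P *m P) b b); last by rewrite spectral_adj_mul mxE eqxx.
by rewrite mxE; apply: eq_bigr => k _; rewrite adjmxE normCKC.
Qed.

End SingularValues.

(* With Y = Q P (P unitary) and sigma_k^2 = sum_p |Q p k|^2, each summand
   |Q p k| |P k q| is controlled by Cauchy-Schwarz column by column. *)
Lemma sum_blockO_entry_le_trnorm S O (Y : 'M[C]_(S * O)) (i j : 'I_S) :
  \sum_o `|blockO o Y i j| <= trnorm Y.
Proof.
set P := spectralmx (adjmx Y *m Y); set Q := Y *m adjmx P.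
have YE p q : Y p q = \sum_k Q p k * P k q by rewrite {1}(mulmx_spectral_adjK Y) mxE.
apply: (@le_trans _ _ (\sum_o \sum_k `|Q (tidx i o) k| * `|P k (tidx j o)|)).
  apply: ler_sum => o _; rewrite mxE YE; apply: le_trans (ler_norm_sum _ _ _) _.
  by under eq_bigr do rewrite normrM.
rewrite exchange_big; apply: ler_sum => k _.
set x := \sum_o _.
have x_ge0 : 0 <= x by apply: sumr_ge0 => o _; apply: mulr_ge0.
rewrite -(sqrCK x_ge0) ler_sqrtC ?nnegrE ?exprn_ge0 ?eigen_gram_ge0 //.
apply: le_trans (cauchy_schwarz _ _) _ => [o|o|]; rewrite ?normr_real //.
rewrite -[spectral_diag _ 0 k]mulr1; apply: ler_pM.
- by apply: sumr_ge0 => o _; apply: exprn_ge0.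
- by apply: sumr_ge0 => o _; apply: exprn_ge0.
- rewrite (eigen_gramE Y k) sum_tidx (bigD1 i) //= lerDl.
  by apply: sumr_ge0 => s _; apply: sumr_ge0 => o _; apply: exprn_ge0.
- rewrite -(sum_row_spectral_sqr Y k) sum_tidx (bigD1 j) //= lerDl.
  by apply: sumr_ge0 => s _; apply: sumr_ge0 => o _; apply: exprn_ge0.
Qed.

Lemma sum_blockO_le_trnorm S O (Y : 'M[C]_(S * O)) :
  \sum_o \sum_i \sum_j `|blockO o Y i j| <= (S ^ 2)%:R * trnorm Y.
Proof.
rewrite exchange_big; under eq_bigr do rewrite exchange_big.
apply: (@le_trans _ _ (\sum_(i < S) \sum_(j < S) trnorm Y)).
  by apply: ler_sum => i _; apply: ler_sum => j _; apply: sum_blockO_entry_le_trnorm.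
by rewrite sumr_const card_ord sumr_const card_ord -mulrnA mulnn mulr_natl.
Qed.

Lemma trnorm_diag_le n (d : 'rV[C]_n) : trnorm (diag_mx d) <= \sum_o `|d 0 o|.
Proof.
set Y := diag_mx d; set P := spectralmx (adjmx Y *m Y).
set lam := spectral_diag (adjmx Y *m Y).
have gram_diag o : (adjmx Y *m Y) o o = `|d 0 o| ^+ 2.
  rewrite mxE (bigD1 o) //= big1 => [|k nk]; last by rewrite !mxE (negPf nk) mulr0n mulr0.
  by rewrite addr0 adjmxE !mxE eqxx mulr1n normCKC.
have gram_spec o : (adjmx Y *m Y) o o = \sum_k `|P k o| ^+ 2 * lam 0 k.
  rewrite {1}(gram_spectralE Y) mxE; apply: eq_bigr => k _.
  by rewrite mul_mx_diag mxE adjmxE normCKC mulrAC.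
rewrite /trnorm (eq_bigr (fun k => \sum_o `|P k o| ^+ 2 * sqrtC (lam 0 k))); last first.
  by move=> k _; rewrite -mulr_suml sum_row_spectral_sqr mul1r.
rewrite exchange_big; apply: ler_sum => o _.
set z := \sum_k _.
have z_ge0 : 0 <= z.
  by apply: sumr_ge0 => k _; rewrite mulr_ge0 ?exprn_ge0 ?sqrtC_ge0 ?eigen_gram_ge0.
rewrite -(sqrCK z_ge0) -(sqrCK (normr_ge0 (d 0 o))) ler_sqrtC ?nnegrE ?exprn_ge0 //.
have := @cauchy_schwarz_weighted _ (fun k => `|P k o| ^+ 2) (fun _ => 1)
  (fun k => sqrtC (lam 0 k)) (fun k => exprn_ge0 _ (normr_ge0 _)) (fun _ => rpred1 _)
  (fun k => sqrtC_real (eigen_gram_ge0 Y k)).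
rewrite /=; under eq_bigr do rewrite mulr1.
under [X in _ <= X * _]eq_bigr do rewrite expr1n mulr1.
under [X in _ <= _ * X]eq_bigr do rewrite sqrtCK.
by rewrite sum_col_spectral_sqr mul1r -gram_spec gram_diag.
Qed.

End TraceNorm.

Section PolicyAverage.
Variables (C : numClosedFieldType) (O : nat) (A : finType).
Variable pi : seq (A * 'I_O) -> A -> C.

Definition dist_after (h : seq (A * 'I_O)) : Prop :=
  forall x rest, is_distribution (pi (h ++ x :: rest)).

Lemma dist_after_rcons h x : dist_after h -> dist_after (h ++ [:: x]).
Proof. by move=> dist_h y rest; rewrite -catA; apply: dist_h. Qed.

Fixpoint traj_avg n h a (F : seq ('I_O * A) -> C) : C :=
  if n is n'.+1 then
    \sum_(o : 'I_O) \sum_(a' : A) pi (h ++ [:: (a, o)]) a' *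
       traj_avg n' (h ++ [:: (a, o)]) a' (fun ws => F ((o, a') :: ws))
  else F [::].

Lemma sum_tupleS (T : finType) n (G : n.+1.-tuple T -> C) :
  \sum_w G w = \sum_x \sum_(w : n.-tuple T) G [tuple of x :: w].
Proof.
rewrite pair_big /= (reindex (fun p : T * n.-tuple T => [tuple of p.1 :: p.2])) /=.
  by apply: eq_bigr => -[x w].
exists (fun w : n.+1.-tuple T => (thead w, [tuple of behead w])).
  by move=> [x w] _ /=; congr pair; apply: val_inj.
by move=> w _; rewrite [RHS]tuple_eta.
Qed.

Lemma sum_tuple_traj_avg n h a (F : seq ('I_O * A) -> C) :
  \sum_(w : n.-tuple ('I_O * A)) F w *
     \prod_(j < n) pi (h ++ take j.+1 (hist_pairs a w)) (tnth w j).2 = traj_avg n h a F.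
Proof.
elim: n h a F => [|n IH] h a F /=.
  under eq_bigr do rewrite big_ord0 mulr1.
  rewrite (bigD1 [tuple]) //= big1 ?addr0 // => w /eqP[].
  exact: tuple0.
rewrite sum_tupleS [RHS]pair_big /=; apply: eq_bigr => -[o a'] _.
rewrite -IH mulr_sumr; apply: eq_bigr => w _.
rewrite big_ord_recl /= take0 mulrCA; congr (_ * (_ * _)).
by apply: eq_bigr => j _; rewrite tnthS -catA.
Qed.

Lemma traj_avg_sum n h a (I : finType) (G : I -> seq ('I_O * A) -> C) :
  traj_avg n h a (fun ws => \sum_i G i ws) = \sum_i traj_avg n h a (G i).
Proof.
elim: n h a G => [|n IH] h a G //=.
under eq_bigr do under eq_bigr do
  rewrite (IH _ _ (fun i ws => G i (_ :: ws))) mulr_sumr.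
under eq_bigr do rewrite exchange_big.
by rewrite exchange_big.
Qed.

Lemma traj_avgZ n h a c F : traj_avg n h a (fun ws => c * F ws) = c * traj_avg n h a F.
Proof.
elim: n h a F => [|n IH] h a F //=.
rewrite mulr_sumr; apply: eq_bigr => o _; rewrite mulr_sumr; apply: eq_bigr => a' _.
by rewrite (IH _ _ (fun ws => F (_ :: ws))) mulrCA.
Qed.

Lemma traj_avgD n h a F G :
  traj_avg n h a (fun ws => F ws + G ws) = traj_avg n h a F + traj_avg n h a G.
Proof.
elim: n h a F G => [|n IH] h a F G //=.
rewrite -big_split; apply: eq_bigr => o _; rewrite -big_split; apply: eq_bigr => a' _.
by rewrite (IH _ _ (fun ws => F (_ :: ws)) (fun ws => G (_ :: ws))) mulrDr.
Qed.

Lemma ler_traj_avg n h a F G : dist_after h ->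
  (forall ws, size ws = n -> F ws <= G ws) -> traj_avg n h a F <= traj_avg n h a G.
Proof.
elim: n h a F G => [|n IH] h a F G dist_h le_FG /=; first exact: le_FG.
apply: ler_sum => o _; apply: ler_sum => a' _.
apply: ler_wpM2l; first exact: (dist_h (a, o) [::]).1.
apply: IH; first exact: dist_after_rcons.
by move=> ws size_ws; apply: le_FG; rewrite /= size_ws.
Qed.

End PolicyAverage.

Section Trajectory.
Variables (C : numClosedFieldType) (S O : nat) (A : finType).
Variables (Phi : A -> 'I_O -> {linear 'M[C]_S -> 'M[C]_S})
          (R : A -> {linear 'M[C]_O -> 'M[C]_(S * O)})
          (E : nat -> {linear 'M[C]_S -> 'M[C]_S})
          (pi : seq (A * 'I_O) -> A -> C) (L : nat).
Hypothesis instrPhi : forall a, is_instrument (Phi a).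
Hypothesis reconstructR : forall a X, R a (ptrS (instr (Phi a) X)) = instr (Phi a) X.
Hypothesis cptpE : forall t, (0 < t < L)%N -> cptp (E t).

Fixpoint traj_chan t a (ws : seq ('I_O * A)) (W : 'M[C]_S) : 'M[C]_S :=
  if ws is (o, a') :: ws' then traj_chan t.+1 a' ws' (E t (Phi a o W)) else W.

Lemma traj_chan_is_linear t a ws : linear (traj_chan t a ws).
Proof. by elim: ws t a => [|[o a'] ws IH] t a c x y //=; rewrite !linearP IH. Qed.

HB.instance Definition _ t a ws :=
  GRing.isLinear.Build _ _ _ _ (traj_chan t a ws) (traj_chan_is_linear t a ws).

Definition last_act a (ws : seq ('I_O * A)) := last a (map snd ws).

Lemma applyA_instr t a ws W :
  applyA Phi R E t (steps a ws) (ptrS (instr (Phi a) W)) =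
  ptrS (instr (Phi (last_act a ws)) (traj_chan t a ws W)).
Proof.
elim: ws t a W => [|[o a'] ws IH] t a W //=.
by rewrite /Atilde reconstructR blockO_instr; apply: IH.
Qed.

Lemma cp_traj_chan t a ws : (0 < t)%N -> (t + size ws <= L)%N ->
  completely_positive (traj_chan t a ws).
Proof.
elim: ws t a => [|[o a'] ws IH] t a t_gt0 tL /=; first exact: cp_id.
have cpE : completely_positive (E t) by apply: (cptpE _).1; move: tL => /=; lia.
apply: (cp_comp (F := traj_chan t.+1 a' ws) (G := E t \o Phi a o)).
  by apply: IH => //; rewrite addSnnS.
exact: cp_comp cpE ((instrPhi a).1 o).
Qed.

Lemma instr_trace a W : \sum_o \tr (Phi a o W) = \tr W.
Proof. by case: (instrPhi a) => _ tpPhi; rewrite -tpPhi raddf_sum. Qed.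

Definition out_trace t a ws W := \sum_o \tr (Phi (last_act a ws) o (traj_chan t a ws W)).

Lemma traj_avg_out_trace n h t a W : dist_after pi h -> (0 < t)%N -> (t + n <= L)%N ->
  traj_avg pi n h a (fun ws => out_trace t a ws W) = \tr W.
Proof.
elim: n h t a W => [|n IH] h t a W dist_h t_gt0 tnL /=; first exact: instr_trace.
have tpE : trace_preserving (E t) by apply: (cptpE _).2; lia.
rewrite -[RHS](instr_trace a W); apply: eq_bigr => o _.
under eq_bigr => a' _ do rewrite (IH _ t.+1 a' _ (dist_after_rcons _ dist_h)) ?addSnnS //.
by rewrite -mulr_suml (dist_h (a, o) [::]).2 mul1r tpE.
Qed.

Lemma trnorm_applyA_le t a o a' ws X : (0 < t)%N -> (t.+1 + size ws <= L)%N ->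
  trnorm (applyA Phi R E t (steps a ((o, a') :: ws)) X) <=
  \sum_i \sum_j `|blockO o (R a X) i j| *
    (2^-1 * (out_trace t.+1 a' ws (E t (delta_mx i i)) +
             out_trace t.+1 a' ws (E t (delta_mx j j)))).
Proof.
move=> t_gt0 tL; rewrite /= /Atilde applyA_instr ptrS_instr.
apply: le_trans (trnorm_diag_le _) _; set B := blockO o (R a X).
under [X in X <= _]eq_bigr do rewrite mxE.
rewrite /out_trace.
under [X in _ <= X]eq_bigr do under eq_bigr do rewrite -big_split !mulr_sumr.
under [X in _ <= X]eq_bigr do rewrite exchange_big.
rewrite [X in _ <= X]exchange_big.
apply: ler_sum => oL _.
have cpE : completely_positive (E t) by apply: (cptpE _).1; lia.
have cpPsi := cp_comp (cp_comp ((instrPhi (last_act a' ws)).1 oL)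
                               (cp_traj_chan a' (ltn0Sn t) tL)) cpE.
exact: (cp_trace_le B cpPsi).
Qed.

Lemma traj_avg_trnorm_le n h t a o a' X :
  dist_after pi h -> (0 < t)%N -> (t.+1 + n <= L)%N ->
  traj_avg pi n h a' (fun ws => trnorm (applyA Phi R E t (steps a ((o, a') :: ws)) X)) <=
  \sum_i \sum_j `|blockO o (R a X) i j|.
Proof.
move=> dist_h t_gt0 tnL.
apply: le_trans.
  apply: ler_traj_avg dist_h _ => ws size_ws.
  by apply: trnorm_applyA_le; rewrite ?size_ws.
have tpE : trace_preserving (E t) by apply: (cptpE _).2; lia.
rewrite traj_avg_sum; apply: ler_sum => i _; rewrite traj_avg_sum; apply: ler_sum => j _.
rewrite !traj_avgZ traj_avgD !traj_avg_out_trace // !tpE !mxtrace_delta.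
by rewrite (_ : 2^-1 * (1 + 1) = 1 :> C) ?mulr1 //; field.
Qed.

End Trajectory.

Theorem lemma5p1 (C : numClosedFieldType) (S O : nat) (A : finType)
  (Phi : A -> 'I_O -> {linear 'M[C]_S -> 'M[C]_S})
  (R : A -> {linear 'M[C]_O -> 'M[C]_(S * O)})
  (kappa : C)
  (E : nat -> {linear 'M[C]_S -> 'M[C]_S})
  (L l : nat) (tau : seq (A * 'I_O)) (a1 : A)
  (pi : seq (A * 'I_O) -> A -> C) :
  (forall a, is_instrument (Phi a)) ->
  (forall a (X : 'M[C]_S), R a (ptrS (instr (Phi a) X)) = instr (Phi a) X) ->
  (forall a, diag_norm_le (R a) kappa) ->
  (forall t, (0 < t < L)%N -> cptp (E t)) ->
  (l <= L - 2)%N -> (2 <= L)%N ->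
  size tau = l ->
  (forall (o : 'I_O) (rest : seq (A * 'I_O)),
      is_distribution (pi (tau ++ (a1, o) :: rest))) ->
  forall X : 'M[C]_O, is_diag X ->
    lhs_sum Phi R E L l tau a1 pi X <= (S ^ 2)%:R * kappa * trnorm X.
Proof.
move=> instrPhi reconstructR normR cptpE lL L2 _ dist_pi X diagX.
have [n Ln] : exists n, (L - 1 - l)%N = n.+1 by exists (L - 2 - l)%N; lia.
rewrite /lhs_sum (sum_tuple_traj_avg pi _ tau a1
  (fun w => trnorm (applyA Phi R E l.+1 (steps a1 w) X))) Ln.
apply: (@le_trans _ _ (\sum_o \sum_i \sum_j `|blockO o (R a1 X) i j|)).
  apply: ler_sum => o _; rewrite -[X in _ <= X]mul1r -(dist_pi o [::]).2 mulr_suml.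
  apply: ler_sum => a2 _; apply: ler_wpM2l; first exact: (dist_pi o [::]).1.
  apply: (traj_avg_trnorm_le (L := L)) => //; last by lia.
  by move=> x rest; rewrite -catA; apply: dist_pi.
apply: le_trans (sum_blockO_le_trnorm _) _.
by rewrite -mulrA ler_wpM2l ?ler0n ?normR.
Qed.
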